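(* Let $p$ be an integer with $|p|>1$ and let $G=\mathbb{Z}[1/p]\rtimes\mathbb{Z}$ with multiplication $(f_1,c_1)(f_2,c_2)=(f_1+p^{-c_1}f_2,\,c_1+c_2)$. Let $C=\{(f_i,c_i)\}$ be a finite generating set of $G$ closed under inverses, let $c=\max\{c_i\mid (f_i,c_i)\in C\}$, and let $d_C$ be the word metric on $G$ with respect to $C$. Then there is a constant $M$ (depending on $p$ and $C$) such that for every $r\ge 0$ and all $h=(f,0)$, $h'=(f',0)$ in the subgroup $\mathbb{Z}[1/p]\times\{0\}\subset G$ with $d_C(h,h')\le r$, we have $\big||f|-|f'|\big|\le M|p|^{rc/2}$ and $|\mathrm{denom}(f)-\mathrm{denom}(f')|\le M|p|^{rc/2}$.
   Context: $G$ is isomorphic to the Baumslag-Solitar group $B_{1,p}=\langle a,t\mid t^{-1}at=a^p\rangle$. The word metric is $d_C(g,g')=$ the least number of elements of $C$ whose product equals $g^{-1}g'$. For $f\in\mathbb{Z}[1/p]$, $|f|$ is its usual absolute value, and $\mathrm{denom}(f)$ is $|p|^{n}$ where $n\ge 0$ is the least nonnegative integer such that $f=m/p^{n}$ for some integer $m$. *)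

From HB Require Import structures.
From mathcomp Require Import all_boot all_order all_algebra.
From mathcomp Require Import all_classical all_reals all_analysis.
From Stdlib Require Import ClassicalEpsilon.
Set Implicit Arguments. Unset Strict Implicit. Unset Printing Implicit Defensive.
Import Order.TTheory GRing.Theory Num.Theory.
Local Open Scope ring_scope.

(* Elements of Z[1/p] ⋊ Z are represented as pairs (f, c) : rat * int with
   f in Z[1/p] (i.e. f * p^n is an integer for some n). *)

Definition pint_at (p : int) (f : rat) (n : nat) : bool :=
  denq (f * (p%:~R : rat) ^+ n) == 1.

Definition in_Zinvp (p : int) (f : rat) : Prop := exists n : nat, pint_at p f n.

Definition inG (p : int) (g : rat * int) : Prop := in_Zinvp p g.1.

Definition bsmul (p : int) (x y : rat * int) : rat * int :=
  (x.1 + (p%:~R : rat) ^ (- x.2) * y.1, x.2 + y.2).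

Definition bsone : rat * int := (0, 0).

Definition bsinv (p : int) (x : rat * int) : rat * int :=
  (- ((p%:~R : rat) ^ x.2 * x.1), - x.2).

Definition bsprod (p : int) (w : seq (rat * int)) : rat * int :=
  foldr (bsmul p) bsone w.

Definition word_over (C : seq (rat * int)) (w : seq (rat * int)) : bool :=
  all (fun x => x \in C) w.

(* C generates G (as a monoid; C is closed under inverses) *)
Definition generates (p : int) (C : seq (rat * int)) : Prop :=
  forall g, inG p g -> exists w, word_over C w /\ bsprod p w = g.

Definition word_dist_is (p : int) (C : seq (rat * int)) (g g' : rat * int) (n : nat)
  : Prop :=
  (exists w, word_over C w /\ size w = n /\ bsprod p w = bsmul p (bsinv p g) g') /\
  (forall w, word_over C w -> bsprod p w = bsmul p (bsinv p g) g' -> (n <= size w)%N).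

Definition cmax (C : seq (rat * int)) : int :=
  \big[Num.max/(head bsone C).2]_(x <- C) x.2.

(* least n such that f = m / p^n (0 if none exists, irrelevant for f in Z[1/p]) *)
Definition pden_exp (p : int) (f : rat) : nat :=
  match excluded_middle_informative (exists n, pint_at p f n) with
  | left H => ex_minn H
  | right _ => 0%N
  end.

Definition pdenom (p : int) (f : rat) : rat := (`|p|%:~R : rat) ^+ pden_exp p f.

From HB Require Import structures.
From mathcomp Require Import all_boot all_order all_algebra.
From mathcomp Require Import all_classical all_reals all_analysis.
From mathcomp Require Import lra zify.
From Stdlib Require Import ClassicalEpsilon.
Set Implicit Arguments. Unset Strict Implicit. Unset Printing Implicit Defensive.
Import Order.TTheory GRing.Theory Num.Theory.
Local Open Scope ring_scope.

(* Split a word of length n representing (f' - f, 0) into halves u v of length at most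
   ceil(n/2); then f' - f = u.1 - v'.1, where v', the inverse of v read backwards, is again
   a word over C.  Each letter rescales what follows by at most |p|^c, so a word of length k
   has first coordinate of size O(|p|^(c k)) and becomes integral after multiplication by
   p^(D + c k), where p^D clears the denominators of all generators.  Finally, adding to f
   something integral at a level N below the denominator exponent of f does not change that
   exponent, so the two denominators either agree or are both at most |p|^N. *)

Lemma normfXz (F : numFieldType) (x : F) (z : int) : `|x ^ z| = `|x| ^ z.
Proof. by case: z => n; rewrite /= ?normfV normrX. Qed.

Section Group.

Variable p : int.
Hypothesis p_neq0 : p != 0.

Let P_neq0 : (p%:~R : rat) != 0. Proof. by rewrite intr_eq0. Qed.

Lemma bsmulA : associative (bsmul p).
Proof.
move=> [a m] [b n] [e k]; rewrite /bsmul /=; congr pair; last exact: addrA.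
by rewrite opprD expfzDr // mulrDr mulrA addrA.
Qed.

Lemma bsmul1g : left_id bsone (bsmul p).
Proof. by move=> [a m]; rewrite /bsmul /= oppr0 expr0z mul1r !add0r. Qed.

Lemma bsmulg1 : right_id bsone (bsmul p).
Proof. by move=> [a m]; rewrite /bsmul /= mulr0 !addr0. Qed.

Lemma bsmulgV x : bsmul p x (bsinv p x) = bsone.
Proof.
case: x => a m; rewrite /bsmul /bsinv /= mulrN mulrA -expfzDr //.
by rewrite addNr expr0z mul1r !subrr.
Qed.

Lemma bsinvM x y : bsinv p (bsmul p x y) = bsmul p (bsinv p y) (bsinv p x).
Proof.
move: x y => [a m] [b n]; rewrite /bsmul /bsinv /= opprK; congr pair; last first.
  by rewrite opprD addrC.
rewrite mulrDr mulrA -expfzDr // addrAC subrr add0r mulrN mulrA -expfzDr //.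
by rewrite opprD addrC (addrC n m).
Qed.

Lemma bsprod_cat u v : bsprod p (u ++ v) = bsmul p (bsprod p u) (bsprod p v).
Proof. by elim: u => [|x u IH] /=; rewrite ?bsmul1g // IH bsmulA. Qed.

Lemma bsprod_rev_inv w : bsprod p (rev (map (bsinv p) w)) = bsinv p (bsprod p w).
Proof.
elim: w => [|x w IH]; first by rewrite /= /bsinv /= mulr0 !oppr0.
by rewrite map_cons rev_cons -cats1 bsprod_cat IH /= bsmulg1 bsinvM.
Qed.

Lemma word_split (C : seq (rat * int)) w g :
    (forall x, x \in C -> bsinv p x \in C) -> word_over C w -> bsprod p w = (g, 0) ->
  exists u v, [/\ word_over C u, word_over C v, (size u <= uphalf (size w))%N,
    (size v <= uphalf (size w))%N & g = (bsprod p u).1 - (bsprod p v).1].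
Proof.
move=> Cinv wC; set k := (size w)./2.
rewrite -[in bsprod p w](cat_take_drop k w) bsprod_cat => hw.
have /andP [uC vC] : word_over C (take k w) && word_over C (drop k w).
  by rewrite -all_cat cat_take_drop.
exists (take k w), (rev (map (bsinv p) (drop k w))); split => //.
- by rewrite /word_over all_rev all_map; apply/allP => x /(allP vC) /Cinv.
- by rewrite size_take_min uphalf_half; lia.
- by rewrite size_rev size_map size_drop uphalf_half -{1}(odd_double_half (size w)); lia.
have -> : bsprod p (take k w) = bsmul p (g, 0) (bsinv p (bsprod p (drop k w))).
  by rewrite -hw -bsmulA bsmulgV bsmulg1.
by rewrite bsprod_rev_inv /bsmul /= oppr0 expr0z mul1r addrK.
Qed.

End Group.

Lemma int_mulrXz_le (P y : rat) (a b : int) : P \is a Num.int -> P != 0 ->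
  y * P ^ a \is a Num.int -> a <= b -> y * P ^ b \is a Num.int.
Proof.
move=> Pint P0 ya; rewrite -subr_ge0 => ab.
rewrite -(subrK a b) addrC expfzDr // mulrA rpredM //.
by case: (b - a) ab => n // _; rewrite rpredX.
Qed.

Section IntegralAt.

Variable p : int.

Lemma pint_atE f n : pint_at p f n = (f * (p%:~R : rat) ^ n%:Z \is a Num.int).
Proof. by rewrite /pint_at Qint_def. Qed.

Lemma pint_atD f g n : pint_at p f n -> pint_at p g n -> pint_at p (f + g) n.
Proof. by rewrite !pint_atE mulrDl; exact: rpredD. Qed.

Lemma pint_atN f n : pint_at p (- f) n = pint_at p f n.
Proof. by rewrite !pint_atE mulNr rpredN. Qed.

Hypothesis p_neq0 : p != 0.

Let P_neq0 : (p%:~R : rat) != 0. Proof. by rewrite intr_eq0. Qed.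

Lemma pint_atXz f (m n : nat) (z : int) :
  pint_at p f m -> m%:Z <= n%:Z + z -> pint_at p ((p%:~R : rat) ^ z * f) n.
Proof.
rewrite !pint_atE mulrAC -expfzDr // [_ * f]mulrC => hf hmn.
by apply: int_mulrXz_le hf _ => //; rewrite ?intr_int // addrC.
Qed.

Lemma pint_at_mono f m n : pint_at p f m -> (m <= n)%N -> pint_at p f n.
Proof.
move=> hf mn; rewrite -[f]mul1r -(expr0z (p%:~R : rat)).
by apply: pint_atXz hf _; rewrite addr0 lez_nat.
Qed.

End IntegralAt.

Lemma pden_exp_spec p f : in_Zinvp p f ->
  pint_at p f (pden_exp p f) /\ forall n, pint_at p f n -> (pden_exp p f <= n)%N.
Proof.
by rewrite /pden_exp => hf; case: excluded_middle_informative => // H; case: ex_minnP.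
Qed.

Lemma pden_expD p f g N : p != 0 -> in_Zinvp p f -> pint_at p g N ->
  (N < pden_exp p f)%N -> pden_exp p (f + g) = pden_exp p f.
Proof.
move=> p0 hf hg hN; have [fa amin] := pden_exp_spec hf.
have gint n : (N <= n)%N -> pint_at p g n by exact: pint_at_mono.
have /pden_exp_spec [fgb bmin] : in_Zinvp p (f + g).
  by exists (pden_exp p f); apply: pint_atD fa (gint _ (ltnW hN)).
apply/eqP; rewrite eqn_leq bmin /=; last exact: pint_atD fa (gint _ (ltnW hN)).
set b := pden_exp p (f + g) in fgb *.
have : (pden_exp p f <= maxn b N)%N.
  apply: amin; rewrite -(addrK g f); apply: pint_atD (pint_at_mono p0 fgb (leq_maxl _ _)) _.
  by rewrite pint_atN gint ?leq_maxr.
by rewrite leq_max [(_ <= N)%N]leqNgt hN orbF.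
Qed.

Lemma ler_dist_le (F : realDomainType) (x y K : F) :
  0 <= x -> x <= K -> 0 <= y -> y <= K -> `|x - y| <= K.
Proof. by move=> *; rewrite ler_norml; apply/andP; split; lra. Qed.

Lemma pdenom_dist_le p f f' N : p != 0 -> in_Zinvp p f -> in_Zinvp p f' ->
  pint_at p (f' - f) N -> `|pdenom p f - pdenom p f'| <= (`|p|%:~R : rat) ^+ N.
Proof.
move=> p0 hf hf' hg; rewrite /pdenom.
have Q1 : 1 <= (`|p|%:~R : rat) by rewrite ler1z -gtz0_ge1 normr_gt0.
have Q0 : 0 <= (`|p|%:~R : rat) ^+ N by rewrite exprn_ge0 // (le_trans ler01).
case: (ltnP N (pden_exp p f)) => hN.
  by rewrite -(pden_expD p0 hf hg hN) (addrC f) subrK subrr normr0.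
case: (ltnP N (pden_exp p f')) => hN'.
  have hg' : pint_at p (f - f') N by rewrite -opprB pint_atN.
  by rewrite -(pden_expD p0 hf' hg' hN') (addrC f') subrK subrr normr0.
by apply: ler_dist_le; rewrite ?exprn_ge0 ?ler_weXn2l // (le_trans ler01).
Qed.

Section WordBounds.

Variables (p : int) (C : seq (rat * int)) (c D : nat) (F : rat).
Hypothesis p_ge2 : 2 <= `|p|.
Hypothesis c_gt0 : (0 < c)%N.
Hypothesis C_inv : forall x, x \in C -> bsinv p x \in C.
Hypothesis C_shift : forall x, x \in C -> - c%:Z <= x.2 <= c%:Z.
Hypothesis C_norm : forall x, x \in C -> `|x.1| <= F.
Hypothesis C_pint : forall x, x \in C -> pint_at p x.1 D.
Hypothesis F_ge0 : 0 <= F.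

Let p_neq0 : p != 0. Proof. by apply: contraTneq p_ge2 => ->. Qed.
Let Q := (`|p|%:~R : rat).
Let Q_ge2 : 2 <= Q. Proof. by rewrite -[2]/((2 : int)%:~R) ler_int. Qed.
Let Q_ge1 : 1 <= Q. Proof. exact: le_trans Q_ge2. Qed.

Lemma word_fst_pint w : word_over C w -> pint_at p (bsprod p w).1 (D + c * size w).
Proof.
elim: w => [|x w IH] /=; first by rewrite pint_atE mul0r rpred0.
case/andP=> /[dup] xC /C_shift /andP [_ xc] /IH wC; apply: pint_atD.
  exact: (pint_at_mono p_neq0 (C_pint xC) (leq_addr _ _)).
by apply: (pint_atXz p_neq0 wC); rewrite mulnS !PoszD -!addrA lerD2l addrCA lerDl subr_ge0.
Qed.

Lemma word_fst_norm_le w : word_over C w -> `|(bsprod p w).1| <= F * (Q ^+ (c * size w) - 1).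
Proof.
elim: w => [|x w IH] /=; first by rewrite muln0 expr0 subrr mulr0 normr0.
case/andP=> xC /IH wC; set y := (bsprod p w).1 in wC *.
have Qc : 2 <= Q ^+ c by rewrite (le_trans Q_ge2) // -{1}(expr1 Q) ler_weXn2l.
have B1 : 1 <= Q ^+ (c * size w) by rewrite exprn_ege1.
have Qx : Q ^ (- x.2) <= Q ^+ c.
  by rewrite exprnP; apply: (ler_weXz2l Q_ge1); rewrite lerNl; case/andP: (C_shift xC).
have := ler_pM (exprz_ge0 _ (le_trans ler01 Q_ge1)) (normr_ge0 y) Qx wC.
have := C_norm xC; rewrite mulnS exprD => x1F yB.
have FA : 0 <= F * (Q ^+ c - 2) by rewrite mulr_ge0 ?subr_ge0.
apply: (le_trans (ler_normD _ _)); rewrite normrM normfXz -intr_norm -/Q.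
lra.
Qed.

Lemma word_diff_bounds w g : word_over C w -> bsprod p w = (g, 0) ->
  `|g| <= 2 * F * Q ^+ (c * uphalf (size w)) /\ pint_at p g (D + c * uphalf (size w)).
Proof.
move=> wC /(word_split p_neq0 C_inv wC) [u [v [uC vC su sv ->]]].
set m := uphalf (size w) in su sv *.
have cm s : (size s <= m)%N -> (c * size s <= c * m)%N by rewrite leq_mul2l orbC => ->.
have norm_le s : word_over C s -> (size s <= m)%N -> `|(bsprod p s).1| <= F * Q ^+ (c * m).
  move=> sC /cm /(ler_weXn2l Q_ge1) Qsm; apply: (le_trans (word_fst_norm_le sC)).
  by rewrite ler_wpM2l //; lra.
have pint_le s : word_over C s -> (size s <= m)%N -> pint_at p (bsprod p s).1 (D + c * m).
  by move=> sC /cm sm; apply: (pint_at_mono p_neq0 (word_fst_pint sC)); rewrite leq_add2l.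
split; last by apply: pint_atD; rewrite ?pint_atN pint_le.
have := norm_le u uC su; have := norm_le v vC sv.
have := ler_normB (bsprod p u).1 (bsprod p v).1; lra.
Qed.

End WordBounds.

Lemma cmax_ge C x : x \in C -> x.2 <= cmax C.
Proof. by move=> xC; apply: le_bigmax_seq. Qed.

Lemma cmax_gt0 p C : generates p C -> 0 < cmax C.
Proof.
move=> /(_ (0, 1)) [|w [wC hw]]; first by exists 0%N; rewrite /pint_at mul0r.
rewrite ltNge; apply/negP => cle0; suff : (bsprod p w).2 <= 0 by rewrite hw.
elim: w wC {hw} => [|x w IH] //= /andP [/cmax_ge xc /IH wC].
by rewrite -[0]addr0 lerD // (le_trans xc cle0).
Qed.

Lemma exprn_uphalf_le_powR (R : realType) (q r : R) (c n : nat) : 1 <= q -> n%:R <= r ->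
  q ^+ (c * uphalf n) <= q ^+ c * q `^ (r * c%:R / 2).
Proof.
move=> q1 nr; have q0 : 0 <= q := le_trans ler01 q1.
rewrite -!powR_mulrn // -powRD ?(gt_eqF (lt_le_trans ltr01 q1)) ?implybT //.
apply: ler_powR => //; rewrite natrM.
have hm : (uphalf n)%:R * 2 <= n%:R + 1 :> R.
  by rewrite natr1 -natrM ler_nat muln2 -geq_uphalf_double.
have : 0 <= c%:R * (r + 1 - (uphalf n)%:R * 2) :> R by rewrite mulr_ge0 //; lra.
have := ler0n R c; lra.
Qed.

Theorem lemma2 (R : realType) (p : int) (hp : 1 < `|p|)
  (C : seq (rat * int))
  (hCG : forall x, x \in C -> inG p x)
  (hCinv : forall x, x \in C -> bsinv p x \in C)
  (hgen : generates p C) :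
  exists M : R,
    forall (r : R) (f f' : rat),
      0 <= r -> in_Zinvp p f -> in_Zinvp p f' ->
      (exists n : nat, word_dist_is p C (f, 0) (f', 0) n /\ n%:R <= r) ->
      `| `|(ratr f : R)| - `|(ratr f' : R)| | <=
          M * ((`|p|%:~R : R) `^ (r * (cmax C)%:~R / 2))
      /\
      `| (ratr (pdenom p f) : R) - ratr (pdenom p f') | <=
          M * ((`|p|%:~R : R) `^ (r * (cmax C)%:~R / 2)).
Proof.
have p0 : p != 0 by apply: contraTneq hp => ->.
have cmax_pos := cmax_gt0 hgen.
set c := `|cmax C|%N; have ec : cmax C = c%:Z by rewrite gez0_abs // ltW.
have c_gt0 : (0 < c)%N by rewrite -ltz_nat -ec.
have C_shift x : x \in C -> - c%:Z <= x.2 <= c%:Z.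
  by move=> xC; rewrite -ec cmax_ge // andbT lerNl; have := cmax_ge (hCinv x xC).
set F := \big[Num.max/0]_(x <- C) `|x.1|.
have F_ge0 : 0 <= F := bigmax_ge_id _ _ _ _.
have C_norm x : x \in C -> `|x.1| <= F by move=> xC; apply: le_bigmax_seq.
set D := \max_(x <- C) pden_exp p x.1.
have C_pint x : x \in C -> pint_at p x.1 D.
  move=> xC; have [hx _] := pden_exp_spec (hCG x xC).
  exact: (pint_at_mono p0 hx (leq_bigmax_seq _ xC _)).
set Q := (`|p|%:~R : rat); set q := (`|p|%:~R : R).
exists (ratr (2 * F + Q ^+ D) * q ^+ c).
move=> r f f' _ hf hf' [n [[[w [wC [<- hw]]] _] hnr]].
have {}hw : bsprod p w = (f' - f, 0).
  by rewrite hw /bsmul /bsinv /= !oppr0 !expr0z !mul1r addr0 addrC.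
have [g_norm g_pint] := word_diff_bounds hp c_gt0 hCinv C_shift C_norm C_pint F_ge0 wC hw.
set m := uphalf (size w) in g_norm g_pint.
have scale_le K : 0 <= K <= 2 * F + Q ^+ D -> ratr (K * Q ^+ (c * m)) <=
    ratr (2 * F + Q ^+ D) * q ^+ c * q `^ (r * (cmax C)%:~R / 2) :> R.
  case/andP=> K0 KM; rewrite rmorphM rmorphXn /= ratr_int -mulrA ec -pmulrn.
  apply: ler_pM; rewrite ?ler_rat ?ler0q ?exprn_ge0 //.
  by apply: exprn_uphalf_le_powR; rewrite ?ler1z; lia.
split.
  rewrite (le_trans (ler_dist_dist _ _)) // distrC -rmorphB -ratr_norm.
  rewrite (le_trans _ (scale_le (2 * F) _)) ?ler_rat //.
  by rewrite lerDl exprn_ge0 ?mulr_ge0.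
rewrite -rmorphB -ratr_norm (le_trans _ (scale_le (Q ^+ D) _)) ?ler_rat ?exprn_ge0 //.
  by rewrite -exprD; apply: pdenom_dist_le.
by rewrite lerDr mulr_ge0.
Qed.
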